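(* Let $L>0$, $d\ge1$, and let $X=\{x^{(1)},\dots,x^{(n)}\}\subset\mathbb{R}^d$ with $\|x^{(i)}\|_\infty\le L$ for all $i$. Let $w\in\mathbb{R}^n$ with $\left(\sum_{i=1}^n|w_i|\right)^2\le\xi$, and let $\alpha>0$. Then for every positive integer $s$, \[ w^T\left(K_X-K^{\mathsf{GS}}_{X,s}\right)w\le\left(\sum_{i=1}^n|w_i|\right)^2 d\,\exp(2dL^2)\left(\frac{2eL^2}{s}\right)^s, \] and moreover this quantity is at most $\alpha$ when $s=\Theta\!\left(\frac{\log\frac{\xi\, d\exp(2dL^2)}{\alpha}}{\log\left(\frac{1}{2eL^2}\log\frac{\xi\, d\exp(2dL^2)}{\alpha}\right)}\right)$ (with a sufficiently large constant).
   Context: $K_X$ is the $n\times n$ matrix with $(K_X)_{i,j}=\exp(-\|x^{(i)}-x^{(j)}\|^2)$ (Euclidean norm). For a positive integer $s$, $K^{\mathsf{GS}}_{X,s}$ is the $n\times n$ matrix with \[ (K^{\mathsf{GS}}_{X,s})_{i,j}=\sum_{j_1=0}^{s-1}\cdots\sum_{j_d=0}^{s-1}\left(e^{-\|x^{(i)}\|^2}\prod_{a=1}^{d}\sqrt{\tfrac{2^{j_a}}{j_a!}}(x^{(i)}_a)^{j_a}\right)\left(e^{-\|x^{(j)}\|^2}\prod_{a=1}^{d}\sqrt{\tfrac{2^{j_a}}{j_a!}}(x^{(j)}_a)^{j_a}\right). \] *)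

From HB Require Import structures.
From mathcomp Require Import all_boot all_order all_algebra.
From mathcomp Require Import all_classical all_reals all_analysis.
Set Implicit Arguments. Unset Strict Implicit. Unset Printing Implicit Defensive.
Import Order.TTheory GRing.Theory Num.Theory.
Local Open Scope ring_scope.

(* The points x^(1..n) in R^d are the rows of X : 'M_(n,d): X i a = x^(i)_a. *)

Definition sqdist (R : realType) (n d : nat) (X : 'M[R]_(n, d)) (i j : 'I_n) : R :=
  \sum_(a < d) (X i a - X j a) ^+ 2.

Definition sqnorm (R : realType) (n d : nat) (X : 'M[R]_(n, d)) (i : 'I_n) : R :=
  \sum_(a < d) (X i a) ^+ 2.

Definition KX (R : realType) (n d : nat) (X : 'M[R]_(n, d)) : 'M[R]_n :=
  \matrix_(i < n, j < n) expR (- sqdist X i j).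

Definition gsfeat (R : realType) (n d s : nat) (X : 'M[R]_(n, d)) (i : 'I_n)
    (jj : {ffun 'I_d -> 'I_s}) : R :=
  expR (- sqnorm X i) *
  \prod_(a < d) (Num.sqrt (2 ^+ (jj a) / ((jj a)`!)%:R) * (X i a) ^+ (jj a)).

Definition KGS (R : realType) (n d : nat) (X : 'M[R]_(n, d)) (s : nat) : 'M[R]_n :=
  \matrix_(i < n, j < n) \sum_(jj : {ffun 'I_d -> 'I_s}) gsfeat X i jj * gsfeat X j jj.

Definition qform (R : realType) (n : nat) (A : 'M[R]_n) (w : 'cV[R]_n) : R :=
  (w^T *m A *m w) 0 0.

Definition l1 (R : realType) (n : nat) (w : 'cV[R]_n) : R := \sum_(i < n) `|w i 0|.

Definition gs_bound (R : realType) (n d : nat) (w : 'cV[R]_n) (L : R) (s : nat) : R :=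
  l1 w ^+ 2 * d%:R * expR (2 * d%:R * L ^+ 2) * (2 * expR 1 * L ^+ 2 / s%:R) ^+ s.

From HB Require Import structures.
From mathcomp Require Import all_boot all_order all_algebra.
From mathcomp Require Import all_classical all_reals all_analysis.
From mathcomp Require Import ring lra.
Import Order.TTheory GRing.Theory Num.Theory.
Import numFieldNormedType.Exports.
Local Open Scope ring_scope.

(* Both kernels factor as exp(-|x|^2) exp(-|y|^2) times a product over the d
   coordinates: K_X has the factors exp(2 x_a y_a), and K^GS the Taylor
   polynomials of order s of the same exponentials.  With |2 x_a y_a| <= 2L^2,
   every factor is at most exp(2L^2) and every Taylor remainder at most
   exp(2L^2) (2L^2)^s / s!, so telescoping the product bounds each entry of
   K_X - K^GS by d exp(2dL^2) (2L^2)^s / s!; a quadratic form is at most its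
   largest entry times (sum |w_i|)^2, and s! >= (s/e)^s gives the bound.
   For the choice of s, write c = 2eL^2 and T = ln(xi d exp(2dL^2) / alpha):
   the bound is at most alpha once s ln(s/c) >= T, and s >= 2T / ln(T/c)
   ensures this because ln t <= t/2. *)

Section ExpTaylor.
Variable R : realType.
Implicit Types x z : R.
Local Open Scope classical_set_scope.

Lemma exp_partial_sum_le x n : 0 <= x ->
  \sum_(k < n) x ^+ k / k`!%:R <= expR x.
Proof.
move=> x0.
have series_nondecr : {homo series (exp_coeff x) : n m / (n <= m)%N >-> n <= m}.
  move=> a b ab; apply: (@nondecreasing_series R (exp_coeff x) predT 0) => //.
  by move=> k _ _; apply: exp_coeff_ge0.
have := nondecreasing_cvgn_le series_nondecr (is_cvg_series_exp_coeff x) n.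
by rewrite /series /= big_mkord.
Qed.

Lemma norm_exp_partial_sum_le z n :
  `|\sum_(k < n) z ^+ k / k`!%:R| <= expR `|z|.
Proof.
apply: le_trans (ler_norm_sum _ _ _) _.
under eq_bigr => k _ do rewrite normrM normfV normrX [`|_%:R|]ger0_norm ?ler0n //.
exact: exp_partial_sum_le.
Qed.

Lemma exprn_div_fact_le_expR x n : 0 <= x -> x ^+ n / n`!%:R <= expR x.
Proof.
move=> x0; apply: le_trans (exp_partial_sum_le x n.+1 x0).
rewrite big_ord_recr /= lerDr sumr_ge0 // => k _.
by rewrite divr_ge0 ?exprn_ge0.
Qed.

Lemma norm_exp_series_segment_le z s N : (s <= N)%N ->
  `|\sum_(s <= k < N) z ^+ k / k`!%:R| <= expR `|z| * (`|z| ^+ s / s`!%:R).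
Proof.
move=> sN; apply: le_trans (ler_norm_sum _ _ _) _.
rewrite mulrC -{1}(add0n s) big_addn.
apply: (@le_trans _ _ (\sum_(0 <= i < N - s) `|z| ^+ s / s`!%:R * (`|z| ^+ i / i`!%:R))).
  apply: ler_sum => i _.
  rewrite normrM normfV normrX [`|_%:R|]ger0_norm ?ler0n //.
  rewrite mulrACA -exprD addnC -invfM ler_wpM2l ?exprn_ge0 //.
  rewrite lef_pV2 ?posrE ?mulr_gt0 ?ltr0n ?fact_gt0 // -natrM ler_nat.
  (* (s + i)! = C(s + i, s) s! i! *)
  have := bin_fact (leq_addl i s); rewrite addnK addnC => <-.
  by apply: leq_pmull; rewrite bin_gt0 leq_addr.
rewrite -mulr_sumr ler_wpM2l ?divr_ge0 ?exprn_ge0 //.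
by rewrite big_mkord; apply: exp_partial_sum_le.
Qed.

Lemma norm_expR_sub_partial_sum_le z s :
  `|expR z - \sum_(k < s) z ^+ k / k`!%:R| <= expR `|z| * (`|z| ^+ s / s`!%:R).
Proof.
set P := \sum_(k < s) _.
have cvg_tail : `|series (exp_coeff z) N - P| @[N --> \oo] --> `|expR z - P|.
  by apply: cvg_norm; apply: cvgB; [exact: is_cvg_series_exp_coeff | exact: cvg_cst].
rewrite -(cvg_lim _ cvg_tail) //; apply: limr_le; first exact: cvgP cvg_tail.
near=> N.
have sN : (s <= N)%N by near: N; exists s.
rewrite /series /= /P -(big_mkord xpredT (fun k => z ^+ k / k`!%:R)).
rewrite (big_cat_nat (leq0n s) sN) /= addrAC subrr add0r.
exact: norm_exp_series_segment_le.
Unshelve. all: by end_near.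
Qed.

Lemma exprn_div_fact_le x s : 0 <= x ->
  x ^+ s / s`!%:R <= (expR 1 * x / s%:R) ^+ s.
Proof.
move=> x0.
have sXs_neq0 : (s%:R : R) ^+ s != 0.
  by case: s => [|m]; rewrite ?expr0 ?oner_neq0 ?expf_neq0.
have -> : x ^+ s / s`!%:R = (x / s%:R) ^+ s * (s%:R ^+ s / s`!%:R).
  by rewrite expr_div_n mulrA divfK.
rewrite [in leLHS]mulrC -[expR 1 * x / _]mulrA [in leRHS]exprMn.
rewrite ler_wpM2r ?exprn_ge0 ?divr_ge0 //.
by rewrite -expRM_natl mulr1 exprn_div_fact_le_expR.
Qed.

End ExpTaylor.

Lemma norm_prod_sub_le (R : numDomainType) d (E F : 'I_d -> R) (M e : R) :
  0 <= M -> 0 <= e ->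
  (forall a, `|E a| <= M) -> (forall a, `|F a| <= M) ->
  (forall a, `|E a - F a| <= M * e) ->
  `|\prod_a E a - \prod_a F a| <= d%:R * M ^+ d * e.
Proof.
move=> M0 e0; elim: d E F => [|d IH] E F EM FM EFe.
  by rewrite !big_ord0 subrr normr0 !mul0r.
rewrite !big_ord_recr /=.
set PE := \prod_(i < d) _; set PF := \prod_(i < d) _; set x := E _; set y := F _.
have -> : PE * x - PF * y = (PE - PF) * x + PF * (x - y) by ring.
apply: le_trans (ler_normD _ _) _; rewrite !normrM.
have head_le : `|PE - PF| * `|x| <= d%:R * M ^+ d * e * M.
  by apply: ler_pM; rewrite ?normr_ge0 ?EM ?IH // => a; rewrite ?EM ?FM ?EFe.
have tail_le : `|PF| * `|x - y| <= M ^+ d * (M * e).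
  apply: ler_pM; rewrite ?normr_ge0 ?EFe //.
  have -> : M ^+ d = \prod_(a < d) M by rewrite prodr_const card_ord.
  by rewrite normr_prod; apply: ler_prod => a _; rewrite normr_ge0 FM.
apply: le_trans (lerD head_le tail_le) _.
suff -> : d%:R * M ^+ d * e * M + M ^+ d * (M * e) = d.+1%:R * M ^+ d.+1 * e by [].
by rewrite -natr1 exprS; ring.
Qed.

Section Kernels.
Variables (R : realType) (n d : nat) (X : 'M[R]_(n, d)).

Lemma KX_entryE i j : KX X i j =
  expR (- sqnorm X i) * expR (- sqnorm X j) * \prod_a expR (2 * X i a * X j a).
Proof.
rewrite mxE -expR_sum -!expRD; congr expR.
by rewrite /sqdist /sqnorm -!sumrN -!big_split; apply: eq_bigr => a _ /=; ring.
Qed.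

Lemma KGS_entryE s i j : KGS X s i j =
  expR (- sqnorm X i) * expR (- sqnorm X j) *
  \prod_a \sum_(k < s) (2 * X i a * X j a) ^+ k / k`!%:R.
Proof.
have feature_mul a k : Num.sqrt (2 ^+ k / k`!%:R) * X i a ^+ k *
    (Num.sqrt (2 ^+ k / k`!%:R) * X j a ^+ k) = (2 * X i a * X j a) ^+ k / k`!%:R.
  rewrite mulrACA -expr2 sqr_sqrtr ?divr_ge0 ?exprn_ge0 //.
  by rewrite !exprMn; ring.
rewrite mxE bigA_distr_bigA mulr_sumr; apply: eq_bigr => jj _.
rewrite /gsfeat mulrACA -big_split /=; congr (_ * _).
by apply: eq_bigr => a _; rewrite feature_mul.
Qed.

Lemma norm_KX_sub_KGS_le (L : R) s i j : (forall i a, `|X i a| <= L) ->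
  `|(KX X - KGS X s) i j| <=
    d%:R * expR (2 * L ^+ 2) ^+ d * ((2 * L ^+ 2) ^+ s / s`!%:R).
Proof.
move=> XL; set c := 2 * L ^+ 2.
have c0 : 0 <= c by rewrite mulr_ge0 ?sqr_ge0.
have z_le a : `|2 * X i a * X j a| <= c.
  have L0 : 0 <= L := le_trans (normr_ge0 _) (XL i a).
  rewrite -mulrA normrM ger0_norm // ler_wpM2l // normrM expr2.
  by apply: ler_pM; rewrite ?normr_ge0 ?XL.
have -> : (KX X - KGS X s) i j = KX X i j - KGS X s i j by rewrite !mxE.
rewrite KX_entryE KGS_entryE -mulrBr normrM.
have gauss_le1 : `|expR (- sqnorm X i) * expR (- sqnorm X j)| <= 1.
  rewrite ger0_norm ?mulr_ge0 ?expR_ge0 // -expRD expR_le1 -opprD oppr_le0.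
  by rewrite addr_ge0 // sumr_ge0 // => a _; rewrite sqr_ge0.
apply: le_trans (ler_piMl (normr_ge0 _) gauss_le1) _.
apply: norm_prod_sub_le => [||a|a|a]; rewrite ?expR_ge0 ?divr_ge0 ?exprn_ge0 //.
- by rewrite ger0_norm ?expR_ge0 // ler_expR (le_trans (ler_norm _)).
- by apply: le_trans (norm_exp_partial_sum_le _ _ _) _; rewrite ler_expR.
- apply: le_trans (norm_expR_sub_partial_sum_le _ _ _) _.
  apply: ler_pM; rewrite ?expR_ge0 ?divr_ge0 ?exprn_ge0 // ?ler_expR //.
  by rewrite ler_wpM2r ?invr_ge0 // lerXn2r ?nnegrE.
Qed.

Lemma qform_le_l1 (A : 'M[R]_n) (w : 'cV[R]_n) (B : R) :
  (forall i j, `|A i j| <= B) -> qform A w <= B * l1 w ^+ 2.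
Proof.
move=> AB; rewrite /qform mxE expr2 /l1 mulr_suml mulr_sumr.
apply: le_trans (ler_norm _) _; apply: le_trans (ler_norm_sum _ _ _) _.
apply: ler_sum => i _; rewrite normrM mulrCA mulrC ler_wpM2l ?normr_ge0 //.
rewrite mxE mulr_sumr; apply: le_trans (ler_norm_sum _ _ _) _.
by apply: ler_sum => k _; rewrite !mxE normrM mulrC ler_wpM2r ?normr_ge0.
Qed.

Lemma qform_KX_sub_KGS_le (L : R) (w : 'cV[R]_n) s :
  (forall i a, `|X i a| <= L) -> qform (KX X - KGS X s) w <= gs_bound d w L s.
Proof.
move=> XL.
apply: le_trans (@qform_le_l1 _ w _ (fun i j => norm_KX_sub_KGS_le L s i j XL)) _.
set c := 2 * L ^+ 2; set K := l1 w ^+ 2 * d%:R * expR c ^+ d.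
have -> : gs_bound d w L s = K * (expR 1 * c / s%:R) ^+ s.
  by rewrite /gs_bound /K /c -expRM_natl; congr (_ * _ * expR _ * _ ^+ s); ring.
rewrite [leLHS](_ : _ = K * (c ^+ s / s`!%:R)); last by rewrite /K; ring.
have K0 : 0 <= K by rewrite /K mulr_ge0 ?exprn_ge0 ?expR_ge0 // mulr_ge0 ?sqr_ge0.
rewrite ler_wpM2l //; apply: exprn_div_fact_le.
by rewrite mulr_ge0 ?sqr_ge0.
Qed.

End Kernels.

Section LogBounds.
Variable R : realType.

Lemma ln_le_half (y : R) : 0 < y -> ln y <= y / 2.
Proof.
move=> y0.
have ln2_le1 : ln (2 : R) <= 1.
  rewrite -[leRHS](expRK 1) ler_ln ?posrE ?expR_gt0 //.
  by apply: le_trans (expR_ge1Dx 1); rewrite lexx.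
have ln_half_le : ln (y / 2) <= y / 2 - 1.
  have y2_gt0 : 0 < y / 2 by rewrite divr_gt0.
  by have := @le_ln1Dx R (y / 2 - 1); rewrite addrCA subrr addr0; apply; lra.
rewrite -[y in ln y](@mulfVK _ 2) // lnM ?posrE ?divr_gt0 //.
lra.
Qed.

Lemma le_mul_ln (u v : R) : 1 < u -> 2 * u / ln u <= v -> u <= v * ln v.
Proof.
move=> u1 v_ge; set v0 := 2 * u / ln u in v_ge.
have lnu0 : 0 < ln u by apply: ln_gt0.
have u0 : 0 < u by lra.
have v00 : 0 < v0 by rewrite divr_gt0 // mulr_gt0.
have ln_v0_ge : ln u / 2 <= ln v0.
  rewrite ln_div ?posrE ?mulr_gt0 // lnM ?posrE //.
  have := ln_le_half _ lnu0; have : 0 <= ln (2 : R) by rewrite ln_ge0 // ler1n.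
  lra.
have ln_v_ge : ln v0 <= ln v by rewrite ler_ln ?posrE // (lt_le_trans v00).
have -> : u = v0 * (ln u / 2) by rewrite /v0; field; rewrite gt_eqF.
by apply: ler_pM; lra.
Qed.

Lemma mul_expr_div_le1 (c A : R) (s : nat) : 0 < c -> c < ln A ->
  2 * ln A / ln (ln A / c) <= s%:R -> A * (c / s%:R) ^+ s <= 1.
Proof.
move=> c0 cA s_ge; have lnA0 : 0 < ln A := lt_trans c0 cA.
have A0 : 0 < A.
  by rewrite ltNge; apply: contraTN lnA0 => /le_trans/(_ ler01)/ln_le0; rewrite -leNgt.
set u := ln A / c; set v := s%:R / c.
have u1 : 1 < u by rewrite ltr_pdivlMr // mul1r.
have v_ge : 2 * u / ln u <= v.
  have -> : 2 * u / ln u = 2 * ln A / ln u / c by rewrite /u; ring.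
  by rewrite ler_wpM2r // invr_ge0 (ltW c0).
have v0 : 0 < v.
  by apply: lt_le_trans v_ge; rewrite divr_gt0 ?ln_gt0 ?mulr_gt0 ?invr_gt0.
have lnA_le : ln A <= s%:R * ln v.
  have := le_mul_ln _ _ u1 v_ge.
  by rewrite /u /v mulrAC ler_pM2r ?invr_gt0.
have -> : c / s%:R = expR (- ln v) by rewrite expRN lnK ?posrE // invf_div.
rewrite -expRM_natl -[A in A * _]lnK ?posrE // -expRD expR_le1.
lra.
Qed.

End LogBounds.

Theorem lemma2p6 (R : realType) :
  (forall (L : R) (n d : nat) (X : 'M[R]_(n, d)) (w : 'cV[R]_n) (xi alpha : R),
     0 < L -> (0 < d)%N ->
     (forall i a, `|X i a| <= L) ->
     l1 w ^+ 2 <= xi -> 0 < alpha ->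
     forall s : nat, (0 < s)%N ->
       qform (KX X - KGS X s) w <= gs_bound d w L s)
  /\
  (exists C : R, 0 < C /\
     forall (L : R) (n d : nat) (X : 'M[R]_(n, d)) (w : 'cV[R]_n) (xi alpha : R),
       0 < L -> (0 < d)%N ->
       (forall i a, `|X i a| <= L) ->
       l1 w ^+ 2 <= xi -> 0 < alpha ->
       let T := ln (xi * d%:R * expR (2 * d%:R * L ^+ 2) / alpha) in
       2 * expR 1 * L ^+ 2 < T ->
       forall s : nat, (0 < s)%N ->
         C * T / ln (T / (2 * expR 1 * L ^+ 2)) <= s%:R ->
         gs_bound d w L s <= alpha).
Proof.
split=> [L n d X w xi alpha _ _ XL _ _ s _|]; first exact: qform_KX_sub_KGS_le.
exists 2; split=> // L n d X w xi alpha L0 _ _ w_xi alpha0 T.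
rewrite {}/T => cT s _ s_ge.
set c := 2 * expR 1 * L ^+ 2 in cT s_ge *.
set B := xi * d%:R * expR (2 * d%:R * L ^+ 2) in cT s_ge *.
have c0 : 0 < c by rewrite !mulr_gt0 ?expR_gt0 ?exprn_gt0.
have gs_bound_le : gs_bound d w L s <= B * (c / s%:R) ^+ s.
  by rewrite /gs_bound -/c !ler_wpM2r ?exprn_ge0 ?divr_ge0 ?ler0n ?expR_ge0 ?(ltW c0).
apply: le_trans gs_bound_le _.
rewrite -[B](mulfVK (lt0r_neq0 alpha0)) mulrAC ger_pMl //.
exact: mul_expr_div_le1.
Qed.
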